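(* Let $n\ge1$, $k\ge1$, $\mathcal{D}=\{0,\ldots,n\}$, and let $i\in\{0,\ldots,n\}$. Let $\mathbf{c}=\mathbf{W}_i0^{k-1}$ (the word $\mathbf{W}_i$ followed by $k-1$ zeros). Then for every $\mathbf{w}\in\mathcal{D}^k$, $$\#\{1\le j\le k\cdot(n+1)^k:\ c_j\cdots c_{j+k-1}=\mathbf{w}\}=k.$$
   Context: Let $\mathbf{w}_0,\mathbf{w}_1,\ldots,\mathbf{w}_{(n+1)^k-1}$ be the elements of $\mathcal{D}^k$ listed in strictly increasing lexicographic order (so $\mathbf{w}_0=0^k$, $\mathbf{w}_1=0^{k-1}1$, \ldots, $\mathbf{w}_{(n+1)^k-1}=n^k$). For $i=0,\ldots,n$ define the word (concatenation) $\mathbf{W}_i=\mathbf{w}_i\mathbf{w}_{i+1}\cdots\mathbf{w}_{(n+1)^k-1}\mathbf{w}_0\mathbf{w}_1\cdots\mathbf{w}_{i-1}$, a word of length $k\cdot(n+1)^k$ (with $\mathbf{W}_0=\mathbf{w}_0\mathbf{w}_1\cdots\mathbf{w}_{(n+1)^k-1}$). *)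

From mathcomp Require Import all_boot.
Set Implicit Arguments. Unset Strict Implicit. Unset Printing Implicit Defensive.

(* Words over the alphabet D = {0,...,n} are represented as [seq nat]
   with all letters <= n. *)

Fixpoint lexlt (s t : seq nat) : bool :=
  match s, t with
  | [::], [::] => false
  | [::], _ :: _ => true
  | _ :: _, [::] => false
  | a :: s', b :: t' => (a < b) || ((a == b) && lexlt s' t')
  end.

Definition inDk (n k : nat) (w : seq nat) : bool :=
  (size w == k) && all (fun a => a <= n) w.

(* W_i = w_i w_{i+1} ... w_{N-1} w_0 ... w_{i-1}, for ws = [:: w_0; ...; w_{N-1}] *)
Definition bigW (ws : seq (seq nat)) (i : nat) : seq nat := flatten (rot i ws).

(* The factor c_j ... c_{j+k-1} of c, with j 1-based. *)
Definition factor (c : seq nat) (k j : nat) : seq nat := take k (drop j.-1 c).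

From mathcomp Require Import all_boot zify.
Set Implicit Arguments. Unset Strict Implicit. Unset Printing Implicit Defensive.

(* Listing D^k in lexicographic order lists the base-(n+1) expansions of
   0, 1, ..., N - 1 with N = (n+1)^k.  As w_i = 0^(k-1) i, the word c is a prefix
   of the concatenation of the expansions of i, i + 1, ..., i + N (taken mod N).
   The factor starting at offset r < k inside the expansion of m consists of the
   last k - r digits of m followed by the first r digits of m + 1; it determines
   m mod N, because the low digits of m determine those of m + 1.  So for each
   offset r the N factors are pairwise distinct words of D^k, i.e. every word
   occurs exactly once, and summing over the k offsets gives k occurrences. *)

Section Digits.

Variable B : nat.

Fixpoint digits (k m : nat) : seq nat :=
  if k is k'.+1 then m %/ B ^ k' %% B :: digits k' m else [::].

Fixpoint undigits (s : seq nat) : nat :=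
  if s is a :: s' then a * B ^ size s' + undigits s' else 0.

Lemma size_digits k m : size (digits k m) = k.
Proof. by elim: k => //= k ->. Qed.

Lemma size_flatten_digits k s : size (flatten (map (digits k) s)) = k * size s.
Proof. by elim: s => [|m s IHs] /=; rewrite ?muln0 // size_cat size_digits IHs mulnS. Qed.

Lemma drop_flatten_digits k q s :
  drop (q * k) (flatten (map (digits k) s)) = flatten (map (digits k) (drop q s)).
Proof.
elim: s q => [|m s IHs] [|q] /=; rewrite ?drop0 ?drop_nil //.
by rewrite mulSn addnC -drop_drop drop_size_cat ?size_digits ?IHs.
Qed.

Lemma digits0 k : digits k 0 = nseq k 0.
Proof. by elim: k => //= k ->; rewrite div0n mod0n. Qed.

Lemma digitsD a b m : digits (a + b) m = digits a (m %/ B ^ b) ++ digits b m.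
Proof. by elim: a => //= a ->; rewrite -divnMA -expnD addnC. Qed.

Lemma drop_digits r k m : r <= k -> drop r (digits k m) = digits (k - r) m.
Proof. by move=> le_rk; rewrite -{1}(subnKC le_rk) digitsD drop_size_cat ?size_digits. Qed.

Lemma take_digits r k m : r <= k -> take r (digits k m) = digits r (m %/ B ^ (k - r)).
Proof. by move=> le_rk; rewrite -{1}(subnKC le_rk) digitsD take_size_cat ?size_digits. Qed.

Lemma modnXS k m : m %% B ^ k.+1 = m %/ B ^ k %% B * B ^ k + m %% B ^ k.
Proof.
rewrite expnS (divn_eq (m %% (B * B ^ k)) (B ^ k)) -modn_divl.
by rewrite (modn_dvdm m (dvdn_mull B (dvdnn (B ^ k)))).
Qed.

Lemma undigitsK k m : undigits (digits k m) = m %% B ^ k.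
Proof. by elim: k => [|k IHk] /=; rewrite ?modn1 // size_digits IHk modnXS. Qed.

Lemma digits_modX k m : digits k (m %% B ^ k) = digits k m.
Proof.
elim: k m => [|k IHk] m //=; congr (_ :: _).
  by rewrite !modn_divl -expnS modn_mod.
rewrite -(IHk (m %% B ^ k.+1)) -[RHS]IHk; congr (digits _ _).
by rewrite (modn_dvdm m (dvdn_exp2l B (leqnSn k))).
Qed.

Lemma eq_digits k m m' : (digits k m == digits k m') = (m == m' %[mod B ^ k]).
Proof.
apply/eqP/eqP => [eq_mm' | eq_mod]; first by rewrite -!undigitsK eq_mm'.
by rewrite -digits_modX eq_mod digits_modX.
Qed.

Lemma rot_digits_enum k i : i <= B ^ k ->
  rot i (map (digits k) (iota 0 (B ^ k))) = map (digits k) (iota i (B ^ k)).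
Proof.
move=> le_iN; rewrite /rot -map_drop -map_take drop_iota take_iota (minn_idPl le_iN).
rewrite add0n -[in RHS](subnK le_iN) iotaD map_cat subnKC //; congr (_ ++ _).
rewrite -[B ^ k]addn0 iotaDl -map_comp; apply: eq_map => m /=.
by rewrite -[RHS]digits_modX modnDl digits_modX.
Qed.

Lemma digits_block_inj k r m m' : r <= k ->
    drop r (digits k m) ++ take r (digits k m.+1)
  = drop r (digits k m') ++ take r (digits k m'.+1) ->
  m = m' %[mod B ^ k].
Proof.
move=> le_rk /eqP; rewrite eqseq_cat ?size_drop ?size_digits //.
case/andP => /eqP eq_low /eqP eq_high.
have eq_succ : digits k m.+1 = digits k m'.+1.
  rewrite -(cat_take_drop r (digits k m.+1)) -(cat_take_drop r (digits k m'.+1)).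
  rewrite eq_high !drop_digits //; congr (_ ++ _); apply/eqP.
  rewrite eq_digits -[m.+1]addn1 -[m'.+1]addn1 eqn_modDr -eq_digits.
  by rewrite -!drop_digits // eq_low.
by apply/eqP; rewrite -(eqn_modDr 1) !addn1 -eq_digits eq_succ.
Qed.

Hypothesis B_gt0 : 0 < B.

Lemma digits_ltn k m : all (fun a => a < B) (digits k m).
Proof. by elim: k => //= k ->; rewrite ltn_pmod. Qed.

Lemma undigits_ltn s : all (fun a => a < B) s -> undigits s < B ^ size s.
Proof.
elim: s => [|a s IHs] /=; first by rewrite expn0.
case/andP => lt_aB /IHs; rewrite expnS.
have : a.+1 * B ^ size s <= B * B ^ size s by rewrite leq_mul2r lt_aB orbT.
rewrite mulSn; lia.
Qed.

Lemma digitsK s : all (fun a => a < B) s -> digits (size s) (undigits s) = s.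
Proof.
elim: s => [|a s IHs] //= /andP [lt_aB digs].
have lt_s := undigits_ltn digs.
congr (_ :: _).
  by rewrite divnMDl ?expn_gt0 ?B_gt0 // divn_small // addn0 modn_small.
by rewrite -digits_modX modnMDl modn_small // IHs.
Qed.

Lemma lexlt_digits k m m' :
  m %% B ^ k < m' %% B ^ k -> lexlt (digits k m) (digits k m').
Proof.
elim: k m m' => [|k IHk] m m' /=; first by rewrite expn0 !modn1.
rewrite !modnXS.
have lt_low x : x %% B ^ k < B ^ k by rewrite ltn_pmod ?expn_gt0 ?B_gt0.
have := lt_low m; have := lt_low m'.
move: (m %/ B ^ k %% B) (m' %/ B ^ k %% B) => a a' lt_m' lt_m lt_mm'.
case: (ltngtP a a') => [//|lt_a'a|eq_aa'] /=.
  have : a'.+1 * B ^ k <= a * B ^ k by rewrite leq_mul2r lt_a'a orbT.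
  rewrite mulSn; lia.
by apply: IHk; rewrite eq_aa' in lt_mm'; lia.
Qed.

Lemma mem_digits_enum k w :
  (w \in map (digits k) (iota 0 (B ^ k))) = (size w == k) && all (fun a => a < B) w.
Proof.
apply/mapP/andP => [[m _ ->] | [/eqP <- digs]].
  by rewrite size_digits digits_ltn.
by exists (undigits w); rewrite ?digitsK // mem_iota undigits_ltn.
Qed.

Lemma digits_block_mem k r m : r <= k ->
  drop r (digits k m) ++ take r (digits k m.+1) \in map (digits k) (iota 0 (B ^ k)).
Proof.
move=> le_rk; rewrite mem_digits_enum drop_digits ?take_digits //.
by rewrite size_cat !size_digits subnK // eqxx all_cat !digits_ltn.
Qed.

Lemma sorted_digits_enum k : sorted lexlt (map (digits k) (iota 0 (B ^ k))).
Proof.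
apply: (homo_sorted_in (e := ltn) (P := mem (iota 0 (B ^ k)))); last first.
  - exact: iota_ltn_sorted.
  - exact/allP.
move=> m m'; rewrite !mem_iota /= => lt_m lt_m' lt_mm'.
by apply: lexlt_digits; rewrite !modn_small.
Qed.

End Digits.

Lemma lexlt_irr : irreflexive lexlt.
Proof. by elim=> //= a s IHs; rewrite ltnn eqxx IHs. Qed.

Lemma lexlt_trans : transitive lexlt.
Proof.
move=> t s u; elim: s t u => [|a s IHs] [|b t] [|c u] //=.
case/orP => [lt_ab | /andP [/eqP <- lt_st]]; case/orP => [lt_bc | /andP [/eqP <- lt_tu]].
- by rewrite (ltn_trans lt_ab lt_bc).
- by rewrite lt_ab.
- by rewrite lt_bc.
- by rewrite eqxx (IHs _ _ lt_st lt_tu) orbT.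
Qed.

Lemma lex_enum_eq n k (ws : seq (seq nat)) :
  sorted lexlt ws -> (forall w, w \in ws = inDk n k w) ->
  ws = map (digits n.+1 k) (iota 0 (n.+1 ^ k)).
Proof.
move=> sorted_ws mem_ws; apply: (irr_sorted_eq lexlt_trans lexlt_irr) => //.
  exact: sorted_digits_enum.
by move=> w; rewrite mem_ws mem_digits_enum.
Qed.

Lemma count_inj_in_onto (T U : eqType) (f : T -> U) (s : seq T) (t : seq U) y :
  uniq s -> {in s &, injective f} -> {subset map f s <= t} -> size t <= size s ->
  y \in t -> count (fun x => f x == y) s = 1.
Proof.
move=> uniq_s inj_f sub_t le_ts t_y.
have uniq_fs : uniq (map f s) by rewrite map_inj_in_uniq.
have [_ eq_fs_t] := uniq_min_size uniq_fs sub_t ltac:(by rewrite size_map).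
have -> : count (fun x => f x == y) s = count_mem y (map f s) by rewrite count_map.
by rewrite (count_uniq_mem y uniq_fs) eq_fs_t t_y.
Qed.

Lemma count_iota_blocks (P : pred nat) k N :
  count P (iota 0 (N * k)) = \sum_(r < k) count (fun q => P (q * k + r)) (iota 0 N).
Proof.
have count_sum (Q : pred nat) M : count Q (iota 0 M) = \sum_(0 <= j < M) Q j.
  by rewrite -sum1_count big_mkcond /index_iota subn0.
rewrite count_sum big_nat_mul.
under eq_bigr => q _ do
  rewrite mulSn addnC -[X in \sum_(X <= _ < _) _]add0n big_addn addKn big_mkord.
rewrite exchange_big /=; apply: eq_bigr => r _.
by rewrite count_sum !big_mkord; apply: eq_bigr => q _; rewrite addnC.
Qed.

Section Factors.

Variables B k i : nat.
Hypotheses (B_gt0 : 0 < B) (k_gt0 : 0 < k) (i_lt_B : i < B).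

Let N := B ^ k.
Let word := flatten (map (digits B k) (iota i N.+1)).

Lemma word_prefix :
  flatten (map (digits B k) (iota i N)) ++ nseq k.-1 0 = take (k * N + k.-1) word.
Proof.
rewrite /word -addn1 iotaD map_cat flatten_cat /= cats0.
rewrite take_cat size_flatten_digits size_iota ltnNge leq_addr /= addKn.
rewrite -digits_modX modnDr digits_modX -[k in digits B k]prednK //.
by rewrite take_digits // subSn // subnn expn1 divn_small // digits0.
Qed.

Lemma word_factor q r : q < N -> r < k ->
  take k (drop (q * k + r) word)
  = drop r (digits B k (i + q)) ++ take r (digits B k (i + q).+1).
Proof.
move=> lt_qN lt_rk; rewrite addnC -drop_drop /word drop_flatten_digits drop_iota.
rewrite subSn ?(ltnW lt_qN) // -(subnSK lt_qN).
rewrite /= drop_cat size_digits lt_rk take_cat size_drop size_digits ltnNge leq_subr /=.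
by rewrite subKn ?(ltnW lt_rk) // take_cat size_digits lt_rk.
Qed.

Lemma count_word_factor_offset r w : r < k -> (size w == k) && all (fun a => a < B) w ->
  count (fun q => take k (drop (q * k + r) word) == w) (iota 0 N) = 1.
Proof.
move=> lt_rk Dw.
rewrite (@eq_in_count _ _
  (fun q => drop r (digits B k (i + q)) ++ take r (digits B k (i + q).+1) == w)); last first.
  by move=> q; rewrite mem_iota => /andP [_ lt_qN]; rewrite word_factor.
apply: (count_inj_in_onto (t := map (digits B k) (iota 0 N))).
- exact: iota_uniq.
- move=> q q'; rewrite !mem_iota /= => lt_qN lt_q'N /(digits_block_inj (ltnW lt_rk)).
  by move/eqP; rewrite eqn_modDl !modn_small // => /eqP.
- by move=> _ /mapP [q _ ->]; apply: digits_block_mem (ltnW lt_rk).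
- by rewrite size_map.
- by rewrite mem_digits_enum.
Qed.

Lemma count_word_factors w : (size w == k) && all (fun a => a < B) w ->
  count (fun j => take k (drop j word) == w) (iota 0 (N * k)) = k.
Proof.
move=> Dw; rewrite count_iota_blocks.
under eq_bigr => r _ do rewrite (count_word_factor_offset (ltn_ord r) Dw).
by rewrite sum1_card card_ord.
Qed.

End Factors.

Theorem lemma2p1 (n k i : nat) (ws : seq (seq nat)) :
  1 <= n -> 1 <= k -> i <= n ->
  sorted lexlt ws ->
  (forall w, w \in ws = inDk n k w) ->
  let c := bigW ws i ++ nseq k.-1 0 in
  forall w, inDk n k w ->
    count (fun j => factor c k j == w) (iota 1 (k * (n.+1 ^ k))) = k.
Proof.
move=> _ k_gt0 le_in sorted_ws mem_ws c w Dk_w.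
have le_iN : i <= n.+1 ^ k.
  by rewrite (leq_trans (leqW le_in)) // -{1}(expn1 n.+1) leq_pexp2l.
rewrite /c /bigW (lex_enum_eq sorted_ws mem_ws) rot_digits_enum //.
rewrite word_prefix // (iotaDl 1 0) count_map.
rewrite -[RHS](count_word_factors i (ltn0Sn n) Dk_w) mulnC.
apply: eq_in_count => j; rewrite mem_iota /= /factor add1n /= => lt_j.
by rewrite !take_drop take_takel //; lia.
Qed.
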